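(* Let $m,n\in\mathbb N$. Then for all Banach spaces $X,Y$ and all bounded linear operators $T:X\to Y$, $$\tau(T|\mathcal H(\mathbb D_{m+1}^{m+n}))\le\tau(T|\mathcal H(\mathbb D_1^n)).$$
   Context: Dyadic intervals: $\Delta_k^{(j)}:=[\frac{j-1}{2^k},\frac{j}{2^k})$. Haar functions: for $k\ge1$, integer $j$, $\chi_k^{(j)}(t)=+2^{(k-1)/2}$ on $\Delta_k^{(2j-1)}$, $-2^{(k-1)/2}$ on $\Delta_k^{(2j)}$, $0$ otherwise, $t\in[0,1)$. $\mathbb D_m^n:=\{(k,j):k=m,\dots,n;\ j=1,\dots,2^{k-1}\}$. For a finite set $\mathbb F$ of such indices and bounded linear $T:X\to Y$, $\tau(T|\mathcal H(\mathbb F))$ is the least $c\ge0$ such that $\|\sum_{(k,j)\in\mathbb F}Tx_k^{(j)}\chi_k^{(j)}|L_2\|\le c(\sum_{(k,j)\in\mathbb F}\|x_k^{(j)}\|^2)^{1/2}$ for all $x_k^{(j)}\in X$, where $\|\cdot|L_2\|$ is the Bochner $L_2([0,1),Y)$ norm. *)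

From HB Require Import structures.
From mathcomp Require Import all_boot all_order all_algebra.
From mathcomp Require Import all_classical all_reals all_analysis.
Set Implicit Arguments. Unset Strict Implicit. Unset Printing Implicit Defensive.
Import Order.TTheory GRing.Theory Num.Theory.
Import numFieldNormedType.Exports.
Local Open Scope classical_set_scope.
Local Open Scope ring_scope.

Definition dyadic (R : realType) (k j : nat) : set R :=
  [set t : R | ((j.-1)%:R / 2 ^+ k <= t) && (t < j%:R / 2 ^+ k)].

Definition haar (R : realType) (k j : nat) (t : R) : R :=
  if (0 <= t) && (t < 1) then
    if `[< @dyadic R k (2 * j).-1 t >] then Num.sqrt (2 ^+ k.-1)
    else if `[< @dyadic R k (2 * j) t >] then - Num.sqrt (2 ^+ k.-1)
    else 0
  else 0.

Definition Dset (m n : nat) : seq (nat * nat) :=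
  flatten [seq [seq (k, j) | j <- iota 1 (2 ^ k.-1)] | k <- iota m (n.+1 - m)].

Definition L2norm (R : realType) (Y : normedModType R) (f : R -> Y) : R :=
  Num.sqrt (fine (\int[@lebesgue_measure R]_(t in `[0%R, 1%R[)
                    ((`|f t| ^+ 2)%:E))%E).

Definition tau (R : realType) (X Y : normedModType R) (T : X -> Y)
  (F : seq (nat * nat)) : R :=
  inf [set c : R | 0 <= c /\
    forall x : nat * nat -> X,
      L2norm (fun t => \sum_(p <- F) @haar R p.1 p.2 t *: T (x p))
        <= c * Num.sqrt (\sum_(p <- F) `|x p| ^+ 2)].

From HB Require Import structures.
From mathcomp Require Import all_boot all_order all_algebra.
From mathcomp Require Import all_classical all_reals all_analysis.
From mathcomp Require Import measurable_realfun zify.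
Import Order.TTheory GRing.Theory Num.Theory.
Import numFieldNormedType.Exports.
Local Open Scope ring_scope.

(* Every Haar function of level at most N is constant on the dyadic cells of
   length 2^-N, so the L_2 norm of a Haar sum over levels <= N is the root mean
   square of its values on these cells.  The Haar functions of D_{m+1}^{m+n}
   supported in the i-th dyadic interval of length 2^-m are those of D_1^n,
   compressed into that interval and multiplied by 2^(m/2); hence the squared
   norm of a sum over D_{m+1}^{m+n} is the sum over i of squared norms of sums
   over D_1^n, and every constant admissible for D_1^n is admissible for
   D_{m+1}^{m+n}.  Boundedness of T only makes the set of constants admissible
   for D_1^n nonempty. *)

Set Implicit Arguments.
Unset Strict Implicit.
Unset Printing Implicit Defensive.

Section DyadicCells.
Variable R : realType.
Local Open Scope classical_set_scope.

(* Cells are numbered from 0: the r-th cell of level N is [dyadic N r.+1]. *)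

Lemma dyadic_itv k j :
  @dyadic R k j = `[j.-1%:R / 2 ^+ k, j%:R / 2 ^+ k[%classic.
Proof. by apply/seteqP; split => t; rewrite /= in_itv. Qed.

Lemma dyadicE N r t : @dyadic R N r.+1 t <-> r%:R <= t * 2 ^+ N < r.+1%:R.
Proof.
have e_gt0 : 0 < (2 : R) ^+ N by rewrite exprn_gt0.
by rewrite /dyadic /= ler_pdivrMr // ltr_pdivlMr.
Qed.

Lemma dyadic_truncn N t : 0 <= t -> @dyadic R N (Num.truncn (t * 2 ^+ N)).+1 t.
Proof. by move=> t_ge0; apply/dyadicE/truncn_itv; rewrite mulr_ge0. Qed.

Lemma truncn_dyadic N r t : @dyadic R N r.+1 t -> Num.truncn (t * 2 ^+ N) = r.
Proof. by move/dyadicE/truncn_def. Qed.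

Lemma dyadic_sub01 N r : (r < 2 ^ N)%N -> @dyadic R N r.+1 `<=` `[0, 1[%classic.
Proof.
move=> rN t; rewrite /= in_itv /= => /andP[rt tr].
have e_gt0 : 0 < (2 : R) ^+ N by rewrite exprn_gt0.
apply/andP; split; first by rewrite (le_trans _ rt) // divr_ge0 // ltW.
by rewrite (lt_le_trans tr) // ler_pdivrMr // mul1r -natrX ler_nat.
Qed.

Lemma lebesgue_dyadic N r :
  lebesgue_measure (@dyadic R N r.+1) = ((2 ^+ N)^-1 : R)%:E.
Proof.
rewrite dyadic_itv lebesgue_measure_itv /= lte_fin ltr_pM2r ?invr_gt0 ?exprn_gt0 //.
by rewrite ltr_nat ltnSn -EFinB -mulrBl -natrB // subSnn mul1r.
Qed.

Lemma dyadic_nested N k r q t : (k <= N)%N -> @dyadic R N r.+1 t ->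
  `[< @dyadic R k q t >] = (q.-1 * 2 ^ (N - k) <= r < q * 2 ^ (N - k))%N.
Proof.
move=> kN tN; have /dyadicE/andP[rt _] := tN.
have e_gt0 : 0 < (2 : R) ^+ N by rewrite exprn_gt0.
have rescale a : a%:R / 2 ^+ k = (a * 2 ^ (N - k))%:R / 2 ^+ N :> R.
  rewrite -(subnKC kN) exprD natrM natrX invfM mulrA addKn.
  by rewrite [RHS]mulrAC mulfK // expf_neq0.
rewrite asboolb !rescale ler_pdivrMr // ltr_pdivlMr //.
rewrite -truncn_ge_nat ?(le_trans _ rt) // -truncn_lt_nat ?(le_trans _ rt) //.
by rewrite (truncn_dyadic tN).
Qed.

Lemma measurable_dyadic k j : measurable (@dyadic R k j).
Proof. by rewrite dyadic_itv; exact: measurable_itv. Qed.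

Lemma measurable_indic_dyadic (D : set R) k j :
  measurable_fun D (EFin \o \1_(@dyadic R k j) : R -> \bar R).
Proof.
apply/measurable_EFinP.
by apply: measurable_indic; exact: measurable_dyadic.
Qed.

Lemma integral_dyadic_step N (g : R -> R) (c : nat -> R) :
  (forall r, 0 <= c r) ->
  (forall r t, (r < 2 ^ N)%N -> @dyadic R N r.+1 t -> g t = c r) ->
  (\int[lebesgue_measure]_(t in `[0%R, 1%R[) (g t)%:E =
     (\sum_(0 <= r < 2 ^ N) c r / 2 ^+ N)%:E)%E.
Proof.
move=> c_ge0 gc.
have g_step : {in `[0%R, 1%R[%classic, forall t, (g t)%:E =
    \sum_(0 <= r < 2 ^ N) ((c r)%:E * (\1_(@dyadic R N r.+1) t)%:E)%E}.
  move=> t; rewrite inE /= in_itv /= => /andP[t_ge0 t_lt1].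
  set r0 := Num.truncn (t * 2 ^+ N).
  have r0N : (r0 < 2 ^ N)%N.
    rewrite truncn_lt_nat ?mulr_ge0 // natrX -[X in _ < X]mul1r.
    by rewrite ltr_pM2r ?exprn_gt0.
  rewrite (bigD1_seq r0) ?mem_index_iota ?iota_uniq //= big1_seq ?adde0.
    rewrite indicE mem_set; last exact: dyadic_truncn.
    by rewrite mule1 (gc r0) //; exact: dyadic_truncn.
  move=> r /andP[r_neq_r0 _]; rewrite indicE memNset ?mule0 //.
  by move=> /truncn_dyadic r0E; rewrite -r0E /r0 eqxx in r_neq_r0.
under eq_integral => t t01 do rewrite g_step //.
rewrite ge0_integral_sum //; last 2 first.
- by move=> r; apply: measurable_funeM; exact: measurable_indic_dyadic.
- by move=> r t _; rewrite mule_ge0 // lee_fin.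
rewrite -sumEFin; apply: eq_big_nat => r /andP[_ rN].
rewrite ge0_integralZl ?lee_fin //; last exact: measurable_indic_dyadic.
rewrite integral_indic //; last exact: measurable_dyadic.
rewrite setIidl; last exact: dyadic_sub01.
by rewrite EFinM; congr (_ * _)%E; exact: lebesgue_dyadic.
Qed.

End DyadicCells.

Section HaarOnCells.
Variable R : realType.

Lemma eq_divn_itv r e a : (0 < e)%N ->
  ((a * e <= r) && (r < a.+1 * e))%N = (r %/ e == a)%N.
Proof. by move=> e_gt0; rewrite eqn_leq -leq_divRL // -ltn_divLR // ltnS andbC. Qed.

Lemma haar_dyadic N k j r t : (k <= N)%N -> (r < 2 ^ N)%N -> @dyadic R N r.+1 t ->
  haar k j.+1 t =
    if (j == (r %/ 2 ^ (N - k))./2)%N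
    then (-1) ^+ odd (r %/ 2 ^ (N - k)) * Num.sqrt (2 ^+ k.-1) else 0.
Proof.
move=> kN rN tr; have := dyadic_sub01 rN tr; rewrite /= in_itv /haar => ->.
rewrite mulnS /= !(dyadic_nested _ kN tr) !eq_divn_itv ?expn_gt0 //.
have := odd_double_half (r %/ 2 ^ (N - k)).
move: (r %/ 2 ^ (N - k))%N (odd _) (_./2) => d b h <-.
case: b => /=; have [<-|neq] := eqVneq j h; rewrite ?expr1 ?expr0 ?mulN1r ?mul1r;
  by repeat case: ifP => /eqP ? //; exfalso; lia.
Qed.

Lemma haar_index_lt N k r : (k <= N)%N -> (r < 2 ^ N)%N ->
  ((r %/ 2 ^ (N - k))./2 < 2 ^ k.-1)%N.
Proof.
move=> kN rN; have d_lt : (r %/ 2 ^ (N - k) < 2 ^ k)%N.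
  by rewrite ltn_divLR ?expn_gt0 // -expnD subnKC.
rewrite -divn2 ltn_divLR //; apply: leq_trans d_lt _.
by case: k {kN} => [|k] //; rewrite expnS mulnC.
Qed.

Lemma big_Dset (V : nmodType) a b (F : nat * nat -> V) :
  \sum_(p <- Dset a b) F p =
  \sum_(a <= k < b.+1) \sum_(0 <= j < 2 ^ k.-1) F (k, j.+1).
Proof.
rewrite /Dset big_flatten /= big_map; apply: eq_bigr => k _.
by rewrite big_map (iotaDl 1 0) big_map /index_iota subn0.
Qed.

(* The value on the r-th cell of level N: at level k the only Haar function not
   vanishing there is chi_k^(d/2+1), with sign (-1)^d, where d = r / 2^(N-k). *)
Definition haar_step (Y : lmodType R) (N a b : nat) (v : nat * nat -> Y)
    (r : nat) : Y :=
  \sum_(a <= k < b.+1)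
    ((-1) ^+ odd (r %/ 2 ^ (N - k)) * Num.sqrt (2 ^+ k.-1)) *:
      v (k, ((r %/ 2 ^ (N - k))./2).+1).

Lemma haar_sum_dyadic (Y : lmodType R) N a b (v : nat * nat -> Y) r t :
  (b <= N)%N -> (r < 2 ^ N)%N -> @dyadic R N r.+1 t ->
  \sum_(p <- Dset a b) haar p.1 p.2 t *: v p = haar_step N a b v r.
Proof.
move=> bN rN tr; rewrite big_Dset; apply: eq_big_nat => k /andP[_ kb].
have kN : (k <= N)%N by lia.
under eq_bigr do
  rewrite /= (haar_dyadic _ kN rN tr) (fun_if (fun c => c *: _)) scale0r.
by rewrite -big_mkcond big_nat1_eq /= haar_index_lt.
Qed.

Lemma L2norm_haar_sum (Y : normedModType R) N a b (v : nat * nat -> Y) :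
  (b <= N)%N ->
  L2norm (fun t : R => \sum_(p <- Dset a b) haar p.1 p.2 t *: v p) =
  Num.sqrt (\sum_(0 <= r < 2 ^ N) `|haar_step N a b v r| ^+ 2 / 2 ^+ N).
Proof.
move=> bN; rewrite /L2norm.
rewrite (@integral_dyadic_step R N _ (fun r => `|haar_step N a b v r| ^+ 2)) //.
by move=> r t rN tr; rewrite (haar_sum_dyadic a v bN rN tr).
Qed.

Lemma mem_Dset a b k j :
  ((k, j) \in Dset a b) = (a <= k <= b)%N && (0 < j <= 2 ^ k.-1)%N.
Proof.
apply/allpairsPdep/andP => [[k' [j' [k'_ab j'_le [-> ->]]]] | [k_ab j_le]].
  by move: k'_ab j'_le; rewrite !mem_iota; split; lia.
by exists k, j; rewrite !mem_iota; split=> //; lia.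
Qed.

Lemma normr_haar_step_le (Y : normedModType R) N a b (v : nat * nat -> Y) r C :
  (b <= N)%N -> (r < 2 ^ N)%N -> (forall q, q \in Dset a b -> `|v q| <= C) ->
  `|haar_step N a b v r| <= (\sum_(a <= k < b.+1) Num.sqrt (2 ^+ k.-1)) * C.
Proof.
move=> bN rN v_le; rewrite /haar_step mulr_suml.
apply: le_trans (ler_norm_sum _ _ _) _; apply: ler_sum_nat => k /andP[ak kb].
rewrite ltnS in kb; have kN := leq_trans kb bN.
rewrite normrZ normrM normrX normrN1 expr1n mul1r ger0_norm ?sqrtr_ge0 //.
by rewrite ler_wpM2l ?sqrtr_ge0 // v_le // mem_Dset ak kb /= haar_index_lt.
Qed.

Lemma L2norm_haar_sum_le (Y : normedModType R) N a b (v : nat * nat -> Y) B :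
  (b <= N)%N -> 0 <= B ->
  (forall r, (r < 2 ^ N)%N -> `|haar_step N a b v r| <= B) ->
  L2norm (fun t : R => \sum_(p <- Dset a b) haar p.1 p.2 t *: v p) <= B.
Proof.
move=> bN B_ge0 step_le; rewrite (L2norm_haar_sum a v bN).
rewrite -(ger0_norm B_ge0) -sqrtr_sqr ler_wsqrtr //.
apply: le_trans (_ : _ <= \sum_(0 <= r < 2 ^ N) B ^+ 2 / 2 ^+ N) _.
  apply: ler_sum_nat => r /andP[_ rN]; rewrite ler_wpM2r ?invr_ge0 ?exprn_ge0 //.
  by rewrite ler_sqr ?nnegrE // step_le.
rewrite sumr_const_nat subn0 -(mulr_natr _ (2 ^ N)) natrX.
by rewrite divfK ?expf_neq0 // sqr_normr.
Qed.

End HaarOnCells.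

Section HaarBlocks.
Variable R : realType.

(* chi_(m+k)^(i 2^(k-1) + j) is chi_k^(j) compressed into the dyadic interval
   Delta_m^(i+1) and multiplied by 2^(m/2). *)
Definition haar_shift (m i : nat) (p : nat * nat) : nat * nat :=
  (m + p.1, i * 2 ^ p.1.-1 + p.2)%N.

Lemma big_nat_mul_split (V : nmodType) a b (F : nat -> V) :
  \sum_(0 <= r < a * b) F r = \sum_(0 <= i < a) \sum_(0 <= s < b) F (i * b + s)%N.
Proof.
rewrite big_nat_mul; apply: eq_bigr => i _.
rewrite -[X in \sum_(X <= _ < _) _]add0n big_addn mulSn addnK.
by apply: eq_bigr => s _; rewrite addnC.
Qed.

Lemma big_Dset_shift (V : nmodType) m n (F : nat * nat -> V) :
  \sum_(p <- Dset m.+1 (m + n)) F p =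
  \sum_(0 <= i < 2 ^ m) \sum_(p <- Dset 1 n) F (haar_shift m i p).
Proof.
under [RHS]eq_bigr do rewrite big_Dset.
rewrite big_Dset -[m.+1]/(1 + m)%N big_addn subSn ?leq_addr // addKn exchange_big.
apply: eq_big_nat => k /andP[k_gt0 _].
have -> : (k + m).-1 = (m + k.-1)%N by lia.
rewrite expnD big_nat_mul_split; apply: eq_bigr => i _.
by apply: eq_bigr => j _; rewrite /haar_shift /= addnC addnS.
Qed.

Lemma haar_step_shift (Y : lmodType R) m n (v : nat * nat -> Y) i s :
  (s < 2 ^ n)%N ->
  haar_step (m + n) m.+1 (m + n) v (i * 2 ^ n + s) =
  Num.sqrt (2 ^+ m) *: haar_step n 1 n (fun p => v (haar_shift m i p)) s.
Proof.
move=> sn; rewrite /haar_step scaler_sumr -[m.+1]/(1 + m)%N big_addn.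
rewrite subSn ?leq_addr // addKn.
apply: eq_big_nat => k /andP[k_gt0]; rewrite ltnS => kn.
rewrite [(k + m)%N]addnC subnDl /haar_shift /=.
have -> : ((i * 2 ^ n + s) %/ 2 ^ (n - k) = i * 2 ^ k + s %/ 2 ^ (n - k))%N.
  by rewrite -{1}(subnKC kn) expnD mulnA divnMDl ?expn_gt0.
have -> : (i * 2 ^ k = (i * 2 ^ k.-1).*2)%N by rewrite -mul2n mulnCA -expnS prednK.
rewrite oddD odd_double halfD odd_double doubleK /= add0n.
have -> : Num.sqrt (2 ^+ (m + k).-1) =
    Num.sqrt (2 ^+ m) * Num.sqrt (2 ^+ k.-1) :> R.
  by rewrite -sqrtrM ?exprn_ge0 // -exprD; congr (Num.sqrt (_ ^+ _)); lia.
by rewrite scalerA mulrCA addnS.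
Qed.

Lemma L2norm_haar_sum_shift (Y : normedModType R) m n (v : nat * nat -> Y) :
  L2norm (fun t : R => \sum_(p <- Dset m.+1 (m + n)) haar p.1 p.2 t *: v p) ^+ 2 =
  \sum_(0 <= i < 2 ^ m)
    L2norm (fun t : R =>
      \sum_(p <- Dset 1 n) haar p.1 p.2 t *: v (haar_shift m i p)) ^+ 2.
Proof.
have cells_ge0 N (w : nat -> Y) :
    0 <= \sum_(0 <= r < 2 ^ N) `|w r| ^+ 2 / 2 ^+ N :> R.
  by apply: sumr_ge0 => r _; rewrite divr_ge0 ?exprn_ge0.
rewrite (@L2norm_haar_sum _ _ (m + n)) // sqr_sqrtr // expnD big_nat_mul_split.
apply: eq_bigr => i _; rewrite (@L2norm_haar_sum _ _ n) // sqr_sqrtr //.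
apply: eq_big_nat => s /andP[_ sn]; rewrite haar_step_shift // normrZ.
rewrite ger0_norm ?sqrtr_ge0 // exprMn sqr_sqrtr ?exprn_ge0 // exprD.
by rewrite invfM mulrACA mulfV ?mul1r // expf_neq0.
Qed.

End HaarBlocks.

Section TauBounds.
Variables (R : realType) (X Y : normedModType R).
Implicit Types (T : X -> Y) (F G : seq (nat * nat)).

Definition tau_bound T F (c : R) : Prop :=
  0 <= c /\ forall x : nat * nat -> X,
    L2norm (fun t : R => \sum_(p <- F) haar p.1 p.2 t *: T (x p))
      <= c * Num.sqrt (\sum_(p <- F) `|x p| ^+ 2).

(* The first hypothesis is needed since [inf set0] is a junk value. *)
Lemma le_tau T F G : (exists c, tau_bound T G c) ->
  (forall c, tau_bound T G c -> tau_bound T F c) -> tau T F <= tau T G.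
Proof.
move=> [c0 G_c0] GF; apply: lb_le_inf; first by exists c0.
by move=> c /GF F_c; apply: ge_inf => //; exists 0 => ? [].
Qed.

Lemma L2norm_ge0 (f : R -> Y) : 0 <= L2norm f.
Proof. exact: sqrtr_ge0. Qed.

Lemma tau_bound_shift T m n c :
  tau_bound T (Dset 1 n) c -> tau_bound T (Dset m.+1 (m + n)) c.
Proof.
have sum_ge0 s (x : nat * nat -> X) : 0 <= \sum_(p <- s) `|x p| ^+ 2.
  by apply: sumr_ge0 => p _; rewrite exprn_ge0.
move=> [c_ge0 bound]; split=> // x.
rewrite -ler_sqr ?nnegrE ?L2norm_ge0 ?mulr_ge0 ?sqrtr_ge0 //.
rewrite L2norm_haar_sum_shift exprMn sqr_sqrtr // big_Dset_shift mulr_sumr.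
apply: ler_sum_nat => i _; have bound_i := bound (fun p => x (haar_shift m i p)).
rewrite -ler_sqr ?nnegrE ?L2norm_ge0 ?mulr_ge0 ?sqrtr_ge0 // in bound_i.
by rewrite exprMn (sqr_sqrtr (sum_ge0 _ _)) in bound_i.
Qed.

Lemma normr_le_sqrt_sum_sqr (I : eqType) (s : seq I) (f : I -> R) i :
  i \in s -> `|f i| <= Num.sqrt (\sum_(j <- s) f j ^+ 2).
Proof.
move=> i_s; rewrite -sqrtr_sqr ler_wsqrtr // (big_rem _ i_s) /= lerDl.
by apply: sumr_ge0 => j _; rewrite sqr_ge0.
Qed.

Lemma tau_bound_exists T (M : R) a b :
  (forall y, `|T y| <= M * `|y|) -> exists c, tau_bound T (Dset a b) c.
Proof.
move=> T_le; pose K := \sum_(a <= k < b.+1) Num.sqrt (2 ^+ k.-1) : R.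
have K_ge0 : 0 <= K by apply: sumr_ge0 => k _; rewrite sqrtr_ge0.
exists (K * `|M|); split=> [|x]; first by rewrite mulr_ge0.
rewrite -mulrA; apply: (L2norm_haar_sum_le (leqnn b)).
  by rewrite !mulr_ge0 ?sqrtr_ge0.
move=> r rb; apply: normr_haar_step_le => // q q_ab.
apply: le_trans (T_le _) _; apply: le_trans (ler_wpM2r (normr_ge0 _) (ler_norm M)) _.
rewrite ler_wpM2l // -[leLHS]normr_id.
exact: (normr_le_sqrt_sum_sqr (fun p => `|x p|)).
Qed.

End TauBounds.

Theorem corollary3p2 (m n : nat) (R : realType)
  (X Y : completeNormedModType R) (T : {linear X -> Y})
  (hT : exists M : R, forall x : X, `|T x| <= M * `|x|) :
  tau T (Dset m.+1 (m + n)) <= tau T (Dset 1 n).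
Proof.
have [M T_bounded] := hT.
apply: le_tau; first exact: tau_bound_exists T_bounded.
exact: tau_bound_shift.
Qed.
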